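(* Let $f_k:\mathbb{R}^n\to\mathbb{R}$ be convex, continuously differentiable, $L_k$-smooth and bounded below, $k=1,\dots,N$, and let $L_{\max}=\max_kL_k$. Set $\tau=\frac{2}{\mu_{\min}+L_{\max}}$ if every $f_k$ is additionally $\mu_k$-strongly convex (with $\mu_{\min}=\min_k\mu_k$), and $\tau=\frac1{L_{\max}}$ otherwise. Let $G_\theta$ be any of the parametrisations (P1)–(P4) and $\tilde\theta$ a parameter with $G_{\tilde\theta}=\tau I$. Given initial points $x_k^0$, define iterates $x_k^{t+1}=x_k^t-G_{\theta_t}\nabla f_k(x_k^t)$, where at each $t$ the parameter $\theta_t$ satisfies $g_t(\theta_t)\le g_t(\tilde\theta)$, with $g_t(\theta)=\frac1N\sum_{k=1}^N f_k(x_k^t-G_\theta\nabla f_k(x_k^t))$. Then $\nabla f_k(x_k^t)\to0$ as $t\to\infty$ for every $k\in\{1,\dots,N\}$.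
   Context: Parametrisations: (P1) $G_\alpha=\alpha I$; (P2) $G_p=\operatorname{diag}(p)$; (P3) $G_P=P\in\mathbb{R}^{n\times n}$; (P4) $G_\kappa x=\kappa\ast x$ (2D zero-padded convolution of an image $x\in\mathbb{R}^{m_1\times m_2}$, $n=m_1m_2$, with a kernel $\kappa$). A function is $L$-smooth if its gradient is $L$-Lipschitz; $\mu$-strongly convex if $f-\frac\mu2\|\cdot\|_2^2$ is convex. *)

From HB Require Import structures.
From mathcomp Require Import all_boot all_order all_algebra.
From mathcomp Require Import all_classical all_reals all_analysis.
Set Implicit Arguments. Unset Strict Implicit. Unset Printing Implicit Defensive.
Import Order.TTheory GRing.Theory Num.Theory.
Import numFieldNormedType.Exports.
Local Open Scope ring_scope.

Section Defs.
Variable R : realType.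

Definition dotv (n : nat) (u v : 'rV[R]_n) : R := \sum_(i < n) u 0 i * v 0 i.
Definition norm2 (n : nat) (v : 'rV[R]_n) : R := Num.sqrt (dotv v v).

Definition convex_fun (n : nat) (f : 'rV[R]_n -> R) : Prop :=
  forall (x y : 'rV[R]_n) (a : R), 0 <= a -> a <= 1 ->
    f (a *: x + (1 - a) *: y) <= a * f x + (1 - a) * f y.

Definition strongly_convex (n : nat) (mu : R) (f : 'rV[R]_n -> R) : Prop :=
  convex_fun (fun x => f x - mu / 2 * (norm2 x) ^+ 2).

Definition is_gradient (n : nat) (f : 'rV[R]_n -> R) (grad : 'rV[R]_n -> 'rV[R]_n) : Prop :=
  forall x : 'rV[R]_n, differentiable f x /\ forall v, 'd f x v = dotv (grad x) v.

Definition lsmooth (n : nat) (L : R) (grad : 'rV[R]_n -> 'rV[R]_n) : Prop :=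
  forall x y, norm2 (grad x - grad y) <= L * norm2 (x - y).

Definition bounded_below (n : nat) (f : 'rV[R]_n -> R) : Prop :=
  exists m : R, forall x, m <= f x.

(* maximum / minimum of a finite nonempty family (0 for the empty family) *)
Definition maxf (N : nat) : ('I_N -> R) -> R :=
  match N with 0 => fun _ => 0 | N'.+1 => fun u => \big[Num.max/u ord0]_(k < N'.+1) u k end.
Definition minf (N : nat) : ('I_N -> R) -> R :=
  match N with 0 => fun _ => 0 | N'.+1 => fun u => \big[Num.min/u ord0]_(k < N'.+1) u k end.

(* 2D zero-padded ("same") convolution of an image x in R^{m1 x m2} with a
   kernel of size (2 r1 + 1) x (2 r2 + 1) centred at (r1, r2):
   (kappa * x)(i,j) = sum_{a,b} kappa(a,b) x(i + r1 - a, j + r2 - b),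
   with x = 0 outside its support. *)
Definition img_at (m1 m2 : nat) (x : 'M[R]_(m1, m2)) (i j : int) : R :=
  match i, j with
  | Posz i', Posz j' =>
      (match insub i' : option 'I_m1 with
       | Some ii => match insub j' : option 'I_m2 with
                    | Some jj => x ii jj | None => 0 end
       | None => 0 end)
  | _, _ => 0
  end.

Definition conv2 (m1 m2 r1 r2 : nat) (kappa : 'M[R]_(r1.*2.+1, r2.*2.+1))
  (x : 'M[R]_(m1, m2)) : 'M[R]_(m1, m2) :=
  \matrix_(i < m1, j < m2)
    \sum_(a < r1.*2.+1) \sum_(b < r2.*2.+1)
      kappa a b * img_at x (i%:Z + r1%:Z - a%:Z) (j%:Z + r2%:Z - b%:Z).

(* The four parametrisations (P1)-(P4) of the preconditioner G_theta on R^n *)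
Inductive param (n : nat) : Type :=
  | P1 : param n
  | P2 : param n
  | P3 : param n
  | P4 : forall m1 m2 r1 r2 : nat, (m1 * m2)%N = n -> param n.

Definition ptype (n : nat) (p : param n) : Type :=
  match p with
  | P1 => R
  | P2 => 'rV[R]_n
  | P3 => 'M[R]_n
  | P4 _ _ r1 r2 _ => 'M[R]_(r1.*2.+1, r2.*2.+1)
  end.

(* action of G_theta on a vector v in R^n (row-vector convention: P v is v *m P^T) *)
Definition Gmap (n : nat) (p : param n) : ptype p -> 'rV[R]_n -> 'rV[R]_n :=
  match p as p0 return ptype p0 -> 'rV[R]_n -> 'rV[R]_n with
  | P1 => fun alpha v => alpha *: v
  | P2 => fun d v => \row_i (d 0 i * v 0 i)
  | P3 => fun P v => v *m P^T
  | P4 m1 m2 r1 r2 e => fun kappa v =>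
      castmx (erefl 1%N, e)
        (mxvec (conv2 kappa (vec_mx (castmx (erefl 1%N, esym e) v))))
  end.

End Defs.

(* Each f_k has an L_max-smooth gradient, so the descent lemma shows that the
   reference step x - tau grad f(x) lowers f by at least
   c |grad f(x)|^2 with c = tau - L_max tau^2 / 2 > 0 (both choices of tau
   satisfy tau L_max < 2).  Since theta_t does at least as well as the
   reference parameter on the average of the f_k, the sum of the f_k decreases
   along the iterates by c |grad f_k(x_k^t)|^2 at every step; being bounded
   below, the sum of these decrements converges, so the gradients tend to 0. *)

From mathcomp Require Import all_boot all_order all_algebra.
From mathcomp Require Import all_classical all_reals all_analysis.
From mathcomp Require Import ring lra.
Set Implicit Arguments. Unset Strict Implicit. Unset Printing Implicit Defensive.
Import Order.TTheory GRing.Theory Num.Theory.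
Import numFieldNormedType.Exports.
Local Open Scope classical_set_scope.
Local Open Scope ring_scope.

Section InnerProduct.
Variables (R : realType) (n : nat).
Implicit Types (u v w : 'rV[R]_n) (a : R).

Lemma dotv_ge0 v : 0 <= dotv v v.
Proof. by apply: sumr_ge0 => i _; rewrite -expr2 sqr_ge0. Qed.

Lemma dotvBl u v w : dotv (u - v) w = dotv u w - dotv v w.
Proof. by rewrite /dotv -sumrB; apply: eq_bigr => i _; rewrite !mxE; ring. Qed.

Lemma dotvZr a u v : dotv u (a *: v) = a * dotv u v.
Proof. by rewrite /dotv mulr_sumr; apply: eq_bigr => i _; rewrite !mxE; ring. Qed.

Lemma dotvZZ a v : dotv (a *: v) (a *: v) = a ^+ 2 * dotv v v.
Proof. by rewrite /dotv mulr_sumr; apply: eq_bigr => i _; rewrite !mxE; ring. Qed.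

Lemma norm2_ge0 v : 0 <= norm2 v.
Proof. exact: sqrtr_ge0. Qed.

Lemma norm2_sqr v : norm2 v ^+ 2 = dotv v v.
Proof. by rewrite /norm2 sqr_sqrtr // dotv_ge0. Qed.

Lemma dotv_young u v (c : R) : 0 < c ->
  dotv u v <= dotv u u / (2 * c) + c / 2 * dotv v v.
Proof.
move=> c_gt0; rewrite /dotv mulr_suml mulr_sumr -big_split /=.
apply: ler_sum => i _.
have -> : u 0 i * u 0 i / (2 * c) + c / 2 * (v 0 i * v 0 i) =
          (u 0 i - c * v 0 i) ^+ 2 / (2 * c) + u 0 i * v 0 i.
  by field; rewrite gt_eqF.
by rewrite lerDr divr_ge0 ?sqr_ge0 // mulr_ge0 // ltW.
Qed.

(* The matrix norm of 'rV_n is the sup norm, which the 2-norm dominates. *)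
Lemma normr_lt_dotv v (e : R) : 0 < e -> dotv v v < e ^+ 2 -> `|v| < e.
Proof.
move=> e_gt0 ve; rewrite /Num.norm /= mx_normrE.
elim/big_ind: _ => // [a b ha hb|[i j] _]; first by rewrite gt_max ha hb.
rewrite /= (ord1 i) -(ltr_pXn2r (n := 2)) ?nnegrE ?normr_ge0 ?ltW //.
rewrite real_normK ?num_real //; apply: le_lt_trans ve.
rewrite /dotv (bigD1 j) //= -expr2 lerDl.
by apply: sumr_ge0 => l _; rewrite -expr2 sqr_ge0.
Qed.

Lemma cvg_dotv0 (v : nat -> 'rV[R]_n) :
  (fun t => dotv (v t) (v t)) @ \oo --> (0 : R) -> v @ \oo --> (0 : 'rV[R]_n).
Proof.
move=> /cvgr0Pnorm_lt dv0; apply/cvgr0Pnorm_lt => e e_gt0.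
apply: filterS (dv0 _ (exprn_gt0 2 e_gt0)) => t.
by rewrite ger0_norm ?dotv_ge0 //; exact: normr_lt_dotv.
Qed.

End InnerProduct.

Section DescentLemma.
Variables (R : realType) (n : nat) (f : 'rV[R]_n -> R) (grad : 'rV[R]_n -> 'rV[R]_n).
Hypothesis grad_f : is_gradient f grad.

Lemma is_derive_line x d (s : R) :
  is_derive s 1 (fun t : R => f (x + t *: d)) (dotv (grad (x + s *: d)) d).
Proof.
have [df dfE] := grad_f (x + s *: d).
pose h t := f (x + t *: d).
have quotE : (fun t : R => t^-1 *: ((h \o shift s) (t *: 1) - h s)) =
    (fun t => t^-1 *: ((f \o shift (x + s *: d)) (t *: d) - f (x + s *: d))).
  apply: funext => t /=; rewrite /h; congr (_ *: (f _ - _)).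
  by rewrite [t *: 1]mulr1 scalerDl addrCA addrA.
apply: DeriveDef; first by rewrite /derivable quotE; exact: diff_derivable.
by rewrite /derive quotE -/(derive f (x + s *: d) d) deriveE.
Qed.

Variable L : R.
Hypotheses (L_gt0 : 0 < L) (smooth_f : lsmooth L grad).

Lemma lsmooth_dotv_incr x d (c : R) : 0 < c ->
  dotv (grad (x + c *: d) - grad x) d <= c * L * dotv d d.
Proof.
move=> c_gt0; set u := grad (x + c *: d) - grad x; set b := dotv d d.
have cL_gt0 : 0 < c * L by rewrite mulr_gt0.
have uu : dotv u u <= L ^+ 2 * (c ^+ 2 * b).
  rewrite -norm2_sqr -dotvZZ -norm2_sqr -exprMn.
  have := smooth_f (x + c *: d) x; rewrite addrAC subrr add0r => hu.
  by rewrite lerXn2r // ?nnegrE ?norm2_ge0 // mulr_ge0 // ?norm2_ge0 // ltW.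
apply: le_trans (dotv_young u d cL_gt0) _.
have -> : c * L * b = L ^+ 2 * (c ^+ 2 * b) / (2 * (c * L)) + c * L / 2 * b.
  by field; rewrite !gt_eqF.
by rewrite lerD2r ler_pM2r // invr_gt0 mulr_gt0.
Qed.

(* Mean value theorem applied to
   phi t = f (x + t d) - t <grad x, d> - L/2 t^2 |d|^2, which is nonincreasing. *)
Lemma descent_lemma x d :
  f (x + d) <= f x + dotv (grad x) d + L / 2 * dotv d d.
Proof.
set a := dotv (grad x) d; set b := dotv d d.
pose h t := f (x + t *: d).
pose phi : R -> R :=
  h - a \*: (id : R -> R) - (L / 2 * b) \*: ((id : R -> R) * (id : R -> R)).
pose dphi (c : R) := dotv (grad (x + c *: d)) d - a *: (1 : R)
                     - (L / 2 * b) *: (c *: (1 : R) + c *: (1 : R)).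
have phi_derive c : is_derive c (1 : R) phi (dphi c).
  by apply: is_deriveB; first apply: is_deriveB; exact: is_derive_line.
have phi_cont : {within `[0, 1], continuous phi}.
  apply: continuous_subspaceT => c; apply: differentiable_continuous.
  by apply/derivable1_diffP; exact: ex_derive.
have [c /andP[c_gt0 _] phiE] := MVT ltr01 (fun c _ => phi_derive c) phi_cont.
have dphi_le0 : dphi c <= 0.
  have := lsmooth_dotv_incr x d c_gt0; rewrite dotvBl -/a -/b.
  by rewrite /dphi /GRing.scale /= !mulr1 => incr; lra.
have : phi 1 <= phi 0 by rewrite -subr_le0 phiE subr0 mulr1.
rewrite /phi /h !fctE /= scale1r scale0r addr0 /GRing.scale /= !mulr1 !mulr0.
lra.
Qed.

End DescentLemma.

Lemma gradient_step_decrease (R : realType) n (f : 'rV[R]_n -> R) grad (L Lm tau : R) :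
  is_gradient f grad -> lsmooth L grad -> 0 < L -> L <= Lm -> forall x,
  f (x - tau *: grad x) <= f x - (tau - Lm / 2 * tau ^+ 2) * dotv (grad x) (grad x).
Proof.
move=> grad_f smooth_f L_gt0 LLm x.
apply: (le_trans (descent_lemma grad_f L_gt0 smooth_f x (- (tau *: grad x)))).
rewrite -scaleNr dotvZr dotvZZ sqrrN -subr_ge0.
set D := dotv _ _.
have -> : f x - (tau - Lm / 2 * tau ^+ 2) * D - (f x + - tau * D + L / 2 * (tau ^+ 2 * D))
        = (Lm - L) / 2 * (tau ^+ 2 * D) by ring.
apply: mulr_ge0; first by rewrite mulr_ge0 ?subr_ge0 ?invr_ge0.
by rewrite mulr_ge0 ?sqr_ge0 ?dotv_ge0.
Qed.

Lemma descent_coeff_gt0 (R : realFieldType) (Lm tau : R) :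
  0 < tau -> tau * Lm < 2 -> 0 < tau - Lm / 2 * tau ^+ 2.
Proof.
move=> tau_gt0 tauLm_lt2.
have -> : tau - Lm / 2 * tau ^+ 2 = tau * (1 - tau * Lm / 2) by ring.
by rewrite mulr_gt0 // subr_gt0 ltr_pdivrMr //; lra.
Qed.

Lemma sufficient_decrease_cvg0 (R : realType) (F u : R ^nat) (c m : R) : 0 < c ->
  (forall t, 0 <= u t) -> (forall t, F t.+1 <= F t - c * u t) ->
  (forall t, m <= F t) -> u @ \oo --> 0.
Proof.
move=> c_gt0 u_ge0 F_decr F_ge.
have partial_le T : c * series u T <= F 0%N - F T.
  elim: T => [|T IH]; first by rewrite /series /= big_geq // mulr0 subrr.
  by rewrite seriesSr mulrDr; have := F_decr T; lra.
apply: cvg_series_cvg_0; apply: nondecreasing_is_cvgn.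
  by rewrite seriesEnat; apply: (nondecreasing_series (P := predT)) => t _ _.
exists ((F 0%N - m) / c) => _ [T _ <-].
by rewrite ler_pdivlMr // mulrC; have := F_ge T; have := partial_le T; lra.
Qed.

Lemma maxf_ge (R : realType) N (u : 'I_N -> R) k : u k <= maxf u.
Proof. by case: N u k => [|N] u k; [case: k | exact: le_bigmax]. Qed.

Lemma minf_gt0 (R : realType) N (u : 'I_N -> R) :
  (0 < N)%N -> (forall k, 0 < u k) -> 0 < minf u.
Proof.
case: N u => [//|N] u _ u_gt0 /=.
by elim/big_ind: _ => // a b ha hb; rewrite lt_min ha hb.
Qed.

Theorem mainTheorem13 (R : realType) (n N : nat) (p : param n)
  (f : 'I_N -> 'rV[R]_n -> R) (grad : 'I_N -> 'rV[R]_n -> 'rV[R]_n)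
  (L : 'I_N -> R) (strong : option ('I_N -> R))
  (thetatilde : ptype R p) (x : nat -> 'I_N -> 'rV[R]_n) (theta : nat -> ptype R p) :
  (0 < N)%N ->
  (forall k, convex_fun (f k)) ->
  (forall k, is_gradient (f k) (grad k)) ->
  (forall k, continuous (grad k)) ->
  (forall k, 0 < L k) ->
  (forall k, lsmooth (L k) (grad k)) ->
  (forall k, bounded_below (f k)) ->
  (match strong with
   | Some mu => forall k, 0 < mu k /\ strongly_convex (mu k) (f k)
   | None => True end) ->
  let tau := match strong with
             | Some mu => 2 / (minf mu + maxf L)
             | None => 1 / maxf L end in
  (forall v, @Gmap R n p thetatilde v = tau *: v) ->
  (forall t k, x t.+1 k = x t k - @Gmap R n p (theta t) (grad k (x t k))) ->
  let g t (th : ptype R p) :=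
    N%:R^-1 * \sum_(k < N) f k (x t k - @Gmap R n p th (grad k (x t k))) in
  (forall t, g t (theta t) <= g t thetatilde) ->
  forall k, (fun t => grad k (x t k)) @ \oo --> (0 : 'rV[R]_n).
Proof.
move=> N_gt0 _ grad_f _ L_gt0 smooth_f f_bdd strongP tau Gtilde x_step g theta_better k.
set Lm := maxf L.
have Lm_gt0 : 0 < Lm := lt_le_trans (L_gt0 k) (maxf_ge L k).
have [tau_gt0 tauLm_lt2] : 0 < tau /\ tau * Lm < 2.
  rewrite /tau; case: strong strongP {tau Gtilde g theta_better} => [mu mu_gt0|_].
    have mmu_gt0 : 0 < minf mu by apply: minf_gt0 => // j; case: (mu_gt0 j).
    rewrite divr_gt0 ?addr_gt0 // mulrAC ltr_pdivrMr ?addr_gt0 // -/Lm.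
    by split => //; lra.
  by split; [rewrite divr_gt0 | rewrite mul1r mulVf ?gt_eqF // ltr1n].
pose c := tau - Lm / 2 * tau ^+ 2.
have c_gt0 : 0 < c := descent_coeff_gt0 tau_gt0 tauLm_lt2.
pose F t := \sum_(j < N) f j (x t j).
have F_decr t : F t.+1 <= F t - c * dotv (grad k (x t k)) (grad k (x t k)).
  have := theta_better t; rewrite /g ler_pM2l ?invr_gt0 ?ltr0n //.
  under eq_bigr do rewrite -x_step.
  under [X in _ <= X -> _]eq_bigr do rewrite Gtilde.
  have step j := gradient_step_decrease tau (grad_f j) (smooth_f j)
                   (L_gt0 j) (maxf_ge L j) (x t j).
  move=> /le_trans; apply; apply: le_trans (ler_sum _ (fun j _ => step j)) _.
  rewrite sumrB lerB // -mulr_sumr ler_pM2l // (bigD1 k) //= lerDl.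
  by apply: sumr_ge0 => j _; exact: dotv_ge0.
have [m m_le] : exists m, forall t, m <= F t.
  have /choice [mf mf_le] := f_bdd.
  by exists (\sum_(j < N) mf j) => t; apply: ler_sum => j _.
apply: cvg_dotv0; exact: sufficient_decrease_cvg0 c_gt0 (fun t => dotv_ge0 _) F_decr m_le.
Qed.
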